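(* Let $x \in \Gamma$ be a BPSP instance. Then the optimal cost and the set of optimal ICC solutions of the BPSP are, respectively, \begin{align*} \textsc{BPSP}(x) &= \frac{1}{2}\Big\{|x|-1-\max_{z\in\{-1,1\}^{|x|/2}} \sum_{i=1}^{|x|-1}(-1)^{\eta(x,i)} z_{x_i} z_{x_{i+1}}\Big\} \\ &= \frac{1}{2}\Big\{|x|-1+\#_{\mathrm{dl}}(x)-\max_{z\in\{-1,1\}^{|x|/2}} \sum_{\substack{i=1\\ x_i\neq x_{i+1}}}^{|x|-1}(-1)^{\eta(x,i)} z_{x_i} z_{x_{i+1}}\Big\},\\ \widetilde{\textsc{BPSP}^*}(x) &= \operatorname{argmax}_{z\in\{-1,1\}^{|x|/2}} \sum_{i=1}^{|x|-1}(-1)^{\eta(x,i)} z_{x_i} z_{x_{i+1}} = \operatorname{argmax}_{z\in\{-1,1\}^{|x|/2}} \sum_{\substack{i=1\\ x_i\neq x_{i+1}}}^{|x|-1}(-1)^{\eta(x,i)} z_{x_i} z_{x_{i+1}}. \end{align*}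
   Context: $\Gamma_n$ is the set of words $x=(x_1,\ldots,x_{2n})\in[n]^{2n}$ in which every symbol of $[n]=\{1,\ldots,n\}$ occurs exactly twice, and $\Gamma=\bigcup_{n\ge1}\Gamma_n$; $|x|=2n$. A valid colouring of $x$ is $f\in\{r,b\}^{2n}$ with $f_i\neq f_j$ whenever $x_i=x_j$, $i\neq j$; its cost is $\xi(f)=\sum_{i=1}^{2n-1}[f_i\neq f_{i+1}]$, and $\textsc{BPSP}(x)$ is the minimum of $\xi(f)$ over valid colourings. In the ICC encoding, $z\in\{r,b\}^n$ gives the colour of the first occurrence of each symbol (the second occurrence gets the opposite colour), and $\widetilde{\textsc{BPSP}^*}(x)$ is the set of ICC strings $z$ minimising the resulting swap count. In the Ising formulation $r\equiv 1$, $b\equiv -1$. The eta function is $\eta(x,i)=[x_{i+1}\in\{x_1,\ldots,x_i\}]\oplus[x_i\in\{x_1,\ldots,x_{i-1}\}]$ for $i\in[2n-1]$, with $[\cdot]$ the Iverson bracket and $\oplus$ exclusive or. The double letter count is $\#_{\mathrm{dl}}(x)=|\{i\in[2n-1]: x_i=x_{i+1}\}|$. *)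

From HB Require Import structures.
From mathcomp Require Import all_boot all_order all_algebra.
Set Implicit Arguments. Unset Strict Implicit. Unset Printing Implicit Defensive.
Import Order.TTheory GRing.Theory Num.Theory.

(* Words are sequences of naturals; symbols are 1..n as in the paper.
   Positions are 0-based: the paper's x_i is [nth 0 x (i-1)]. *)

Definition inGamma (n : nat) (x : seq nat) : Prop :=
  [/\ 0 < n, size x = 2 * n, all (fun s => 0 < s <= n) x
    & forall s, 0 < s <= n -> count_mem s x = 2].

(* Number of colour swaps xi(f) of a colour sequence (true = r, false = b). *)
Definition cost (f : seq bool) : nat :=
  \sum_(0 <= j < (size f).-1) (nth false f j != nth false f j.+1).

Definition valid (x : seq nat) (f : seq bool) : bool :=
  [forall i : 'I_(size x), forall j : 'I_(size x),
     (i != j) && (nth 0 x i == nth 0 x j) ==> (nth false f i != nth false f j)].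

(* BPSP(x): minimum cost over valid colourings f in {r,b}^{2n}.
   The default 2n of the min is never reached since a valid colouring exists
   and every cost is <= 2n - 1. *)
Definition BPSP (n : nat) (x : seq nat) : nat :=
  \big[minn/(2 * n)]_(f : (2 * n).-tuple bool | valid x f) cost f.

Definition zs (n : nat) (z : n.-tuple bool) (s : nat) : bool := nth false z s.-1.

Definition icc (n : nat) (x : seq nat) (z : n.-tuple bool) : seq bool :=
  [seq (if nth 0 x j \in take j x then ~~ zs z (nth 0 x j) else zs z (nth 0 x j))
  | j <- iota 0 (size x)].

Definition BPSPstar (n : nat) (x : seq nat) : {set n.-tuple bool} :=
  [set z | [forall z' : n.-tuple bool, cost (icc x z) <= cost (icc x z')]].

Definition spin (b : bool) : int := if b then 1%R else (-1)%R.

(* eta(x, i) with 0-based j = i - 1: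
   [x_{i+1} in {x_1..x_i}] xor [x_i in {x_1..x_{i-1}}]. *)
Definition eta (x : seq nat) (j : nat) : bool :=
  (nth 0 x j.+1 \in take j.+1 x) (+) (nth 0 x j \in take j x).

Definition dl (x : seq nat) : nat :=
  \sum_(0 <= j < (size x).-1) (nth 0 x j == nth 0 x j.+1).

Local Open Scope ring_scope.

Definition H1 (n : nat) (x : seq nat) (z : n.-tuple bool) : int :=
  \sum_(0 <= j < (size x).-1)
     (-1) ^+ eta x j * spin (zs z (nth 0 x j)) * spin (zs z (nth 0 x j.+1)).

Definition H2 (n : nat) (x : seq nat) (z : n.-tuple bool) : int :=
  \sum_(0 <= j < (size x).-1 | nth 0 x j != nth 0 x j.+1)
     (-1) ^+ eta x j * spin (zs z (nth 0 x j)) * spin (zs z (nth 0 x j.+1)).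

(* max over z in {-1,1}^n (identified with {r,b}^n via spin); the default
   -|x| is below every value since |H| <= |x| - 1 and the range is nonempty. *)
Definition maxH (n : nat) (x : seq nat) (H : n.-tuple bool -> int) : int :=
  \big[Num.max/ - (size x)%:Z]_(z : n.-tuple bool) H z.

Definition argmaxH (n : nat) (H : n.-tuple bool -> int) : {set n.-tuple bool} :=
  [set z | [forall z' : n.-tuple bool, H z' <= H z]].

From Pilot Require Import Defs.
From HB Require Import structures.
From mathcomp Require Import all_boot all_order all_algebra zify lra.
Import Order.TTheory GRing.Theory Num.Theory.
Set Implicit Arguments. Unset Strict Implicit.
Local Open Scope ring_scope.

(* In the colouring induced by an ICC string z, position j gets z_{x_j}, flipped
   iff x_j occurred before; so there is a swap between j and j+1 exactly when
   (-1)^eta(x,j) z_{x_j} z_{x_{j+1}} = -1, and 2 cost = |x| - 1 - H1 z. Since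
   each letter occurs twice, every valid colouring is induced by an ICC string,
   so minimising the cost is maximising H1. A double letter x_j = x_{j+1} always
   contributes -1 to H1, whence H2 = H1 + #dl. *)

Lemma size_icc n x (z : n.-tuple bool) : size (icc x z) = size x.
Proof. by rewrite size_map size_iota. Qed.

Lemma nth_icc n x (z : n.-tuple bool) j : (j < size x)%N ->
  nth false (icc x z) j = (nth 0%N x j \in take j x) (+) zs z (nth 0%N x j).
Proof.
move=> ltjx; rewrite (nth_map 0%N) ?size_iota // nth_iota // add0n.
by case: (_ \in _); case: (zs _ _).
Qed.

Lemma spin_addb_mul a b c d :
  spin (a (+) c) * spin (b (+) d) = (-1) ^+ (b (+) a) * spin c * spin d.
Proof. by case: a; case: b; case: c; case: d. Qed.

Lemma neq_spin a b : ((a != b) : nat)%:Z * 2 = 1 - spin a * spin b.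
Proof. by case: a; case: b. Qed.

Lemma cost_le f : (cost f <= (size f).-1)%N.
Proof.
rewrite -[X in (_ <= X)%N]subn0 -[X in (_ <= X)%N]muln1 -sum_nat_const_nat.
by apply: leq_sum => j _; exact: leq_b1.
Qed.

Lemma cost_spin f : (0 < size f)%N ->
  (cost f)%:Z * 2 = (size f)%:Z - 1
    - \sum_(0 <= j < (size f).-1) spin (nth false f j) * spin (nth false f j.+1).
Proof.
move=> f_gt0; rewrite /cost -natz natr_sum mulr_suml.
have -> : (size f)%:Z - 1 = \sum_(0 <= j < (size f).-1) 1.
  by rewrite sumr_const_nat subn0 -[in LHS](prednK f_gt0) -natz -natr1 addrK.
by rewrite -sumrB; apply: eq_bigr => j _; rewrite natz neq_spin.
Qed.

Lemma cost_icc n x (z : n.-tuple bool) : (0 < size x)%N ->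
  (cost (icc x z))%:Z * 2 = (size x)%:Z - 1 - H1 x z.
Proof.
move=> x_gt0; rewrite cost_spin size_icc //; congr (_ - _).
apply: eq_big_nat => j /andP[_ ltj]; rewrite !nth_icc; try lia.
exact: spin_addb_mul.
Qed.

Lemma H1_gt n x (z : n.-tuple bool) : (0 < size x)%N -> - (size x)%:Z < H1 x z.
Proof.
move=> x_gt0; have := cost_icc z x_gt0; have := cost_le (icc x z).
by rewrite size_icc; lia.
Qed.

Lemma BPSPstar_argmaxH1 n x : (0 < size x)%N -> BPSPstar n x = argmaxH (H1 (n:=n) x).
Proof.
move=> x_gt0; apply/setP => z; rewrite !inE; apply: eq_forallb => z'.
have := cost_icc z x_gt0; have := cost_icc z' x_gt0.
by move=> ? ?; apply/idP/idP; lia.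
Qed.

Section AtMostTwice.

Variable x : seq nat.
Hypothesis count_le2 : forall s, (count_mem s x <= 2)%N.

Lemma repeat_notin_take i j : (i < j < size x)%N ->
  nth 0%N x i = nth 0%N x j -> nth 0%N x i \notin take i x.
Proof.
case/andP=> ltij ltjx xij; have ltix := ltn_trans ltij ltjx.
have in_drop : nth 0%N x i \in drop i.+1 x.
  rewrite xij -(subnKC ltij) -nth_drop mem_nth // size_drop.
  by rewrite ltn_sub2r // (leq_ltn_trans ltij).
have := count_le2 (nth 0%N x i).
rewrite -{2}(cat_take_drop i x) count_cat (drop_nth 0%N ltix) /= eqxx.
move: in_drop; rewrite -!has_pred1 !has_count.
(* [lia] sees the two occurrences of each count as distinct atoms
   (their element types differ syntactically) unless they are abstracted. *)
set a := count_mem _ (take i x); set b := count_mem _ (drop i.+1 x).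
by clearbody a b; lia.
Qed.

Lemma icc_pair_neq n (z : n.-tuple bool) i j : (i < j < size x)%N ->
  nth 0%N x i = nth 0%N x j -> nth false (icc x z) i != nth false (icc x z) j.
Proof.
move=> /andP[ltij ltjx] xij; have ltix := ltn_trans ltij ltjx.
have seen_j : nth 0%N x j \in take j x.
  by rewrite -xij -(nth_take 0%N ltij) mem_nth // size_take ltjx.
rewrite !nth_icc // (negbTE (repeat_notin_take _ xij)) ?ltij // seen_j xij.
by case: (zs _ _).
Qed.

Lemma icc_valid n (z : n.-tuple bool) : valid x (icc x z).
Proof.
apply/forallP => i; apply/forallP => j; apply/implyP => /andP[neq_ij /eqP xij].
case: (ltngtP i j) => [ltij | ltji | eq_ij].
- by apply: icc_pair_neq xij; rewrite ltij ltn_ord.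
- by rewrite eq_sym; apply: icc_pair_neq (esym xij); rewrite ltji ltn_ord.
- by rewrite (val_inj eq_ij) eqxx in neq_ij.
Qed.

Lemma H2_H1 n (z : n.-tuple bool) : H2 x z = H1 x z + (dl x)%:Z.
Proof.
rewrite /H2 big_mkcond /dl -natz natr_sum -big_split /H1.
apply: eq_big_nat => j /andP[_ ltj]; have ltj1 : (j.+1 < size x)%N by lia.
case: (nth 0%N x j =P nth 0%N x j.+1) => [xjj | _] /=; last by rewrite addr0.
have eta_double : Defs.eta x j.
  rewrite /Defs.eta (negbTE (repeat_notin_take _ xjj)) ?ltnSn // addbF -xjj.
  by rewrite -(nth_take 0%N (ltnSn j)) mem_nth // size_take ltj1.
rewrite eta_double -xjj.
by case: (zs _ _).
Qed.

End AtMostTwice.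

Lemma valid_neq x f i j : valid x f -> (i < size x)%N -> (j < size x)%N -> i != j ->
  nth 0%N x i = nth 0%N x j -> nth false f i != nth false f j.
Proof.
move=> /forallP valid_f ltix ltjx neq_ij xij.
move/forallP: (valid_f (Ordinal ltix)) => /(_ (Ordinal ltjx)) /implyP; apply.
by rewrite -val_eqE /= neq_ij xij eqxx.
Qed.

Definition icc_of n (x : seq nat) (f : seq bool) : n.-tuple bool :=
  [tuple of mkseq (fun i => nth false f (index i.+1 x)) n].

Lemma valid_iccE n x f : all (fun s => 0 < s <= n)%N x -> size f = size x ->
  valid x f -> f = icc x (icc_of n x f).
Proof.
move=> letters size_f valid_f; apply: (@eq_from_nth _ false); first by rewrite size_icc.
move=> j; rewrite size_f => ltjx; rewrite nth_icc //.
set s := nth 0%N x j; have /andP[s_gt0 s_le] := allP letters s (mem_nth 0%N ltjx).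
have -> : zs (icc_of n x f) s = nth false f (index s x).
  by rewrite /zs nth_mkseq prednK //; lia.
have [seen | fresh] := boolP (s \in take j x).
  have lt_idx : (index s x < j)%N by rewrite -in_take_leq // (ltnW ltjx).
  have neq_idx : j != index s x by rewrite neq_ltn lt_idx orbT.
  have := valid_neq valid_f ltjx (ltn_trans lt_idx ltjx) neq_idx
    (esym (nth_index 0%N (mem_nth 0%N ltjx))).
  by case: (nth false f j); case: (nth false f _).
have -> // : index s x = j.
  by apply/eqP; rewrite eqn_leq index_nth // leqNgt -in_take_leq ?(ltnW ltjx).
Qed.

Lemma inGamma_count_le2 n x : inGamma n x -> forall s, (count_mem s x <= 2)%N.
Proof.
case=> _ _ letters count2 s; have [s_in | s_out] := boolP (0 < s <= n)%N.
  by rewrite count2.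
rewrite (count_memPn _) //; apply: contra s_out; exact: (allP letters).
Qed.

Lemma BPSPstar_neq0 n x : BPSPstar n x != set0.
Proof.
apply/set0Pn; exists [arg min_(z < [tuple of nseq n false]) cost (icc x z)].
by rewrite inE; case: arg_minnP => // z _ z_min; apply/forallP => z'; exact: z_min.
Qed.

Lemma BPSP_icc n x z : inGamma n x -> z \in BPSPstar n x -> BPSP n x = cost (icc x z).
Proof.
move=> xG zopt; have count_le2 := inGamma_count_le2 xG.
case: xG => n_gt0 size_x letters _.
have size_icc_z : size (icc x z) == (2 * n)%N by rewrite size_icc size_x.
have valid_icc_z : valid x (Tuple size_icc_z) by exact: icc_valid.
have cost_le_2n (f : (2 * n).-tuple bool) : (cost f <= 2 * n)%N.
  by rewrite (leq_trans (cost_le f)) // size_tuple leq_pred.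
rewrite /BPSP -minEnat; apply/eqP; rewrite eq_le (bigmin_le_cond _ _ valid_icc_z) /=.
have [f valid_f ->] := eq_bigmin (x := (2 * n)%N) _
  (fun f : (2 * n).-tuple bool => valid x f) (fun f => cost f) valid_icc_z
  (fun f _ => cost_le_2n f).
have size_f : size f = size x by rewrite size_tuple size_x.
rewrite (valid_iccE letters size_f valid_f).
by move: zopt; rewrite inE => /forallP.
Qed.

Lemma maxH_argmax n x (H : n.-tuple bool -> int) z :
  (forall z', - (size x)%:Z <= H z') -> z \in argmaxH H -> maxH x H = H z.
Proof.
move=> H_ge; rewrite inE => /forallP z_max.
by apply/eqP; rewrite eq_le le_bigmax andbT; apply/bigmax_leP.
Qed.

Lemma argmaxH_shift n (H H' : n.-tuple bool -> int) c :
  (forall z, H' z = H z + c) -> argmaxH H' = argmaxH H.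
Proof.
move=> HH'; apply/setP => z; rewrite !inE.
by apply: eq_forallb => z'; rewrite !HH' lerD2r.
Qed.

Unset Implicit Arguments.

Theorem corollary5 (n : nat) (x : seq nat) :
  inGamma n x ->
  [/\ (BPSP n x)%:Q = 2^-1 * ((size x)%:Q - 1 - (maxH x (H1 (n:=n) x))%:~R),
      (BPSP n x)%:Q = 2^-1 * ((size x)%:Q - 1 + (dl x)%:Q - (maxH x (H2 (n:=n) x))%:~R),
      BPSPstar n x = argmaxH (H1 (n:=n) x)
    & BPSPstar n x = argmaxH (H2 (n:=n) x)].
Proof.
move=> xG; have count_le2 := inGamma_count_le2 xG.
have x_gt0 : (0 < size x)%N by case: xG => n_gt0 ->; rewrite muln_gt0.
have star_H1 := BPSPstar_argmaxH1 n x_gt0.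
have star_H2 : BPSPstar n x = argmaxH (H2 (n:=n) x).
  by rewrite star_H1 (argmaxH_shift (H2_H1 count_le2 (n:=n))).
have H1_ge (z : n.-tuple bool) : - (size x)%:Z <= H1 x z := ltW (H1_gt z x_gt0).
have H2_ge (z : n.-tuple bool) : - (size x)%:Z <= H2 x z.
  by rewrite H2_H1 // (le_trans (H1_ge z)) // lerDl.
have [z zopt] := set0Pn _ (BPSPstar_neq0 n x).
have z_H1 : z \in argmaxH (H1 x) by rewrite -star_H1.
have z_H2 : z \in argmaxH (H2 x) by rewrite -star_H2.
rewrite (maxH_argmax H1_ge z_H1) (maxH_argmax H2_ge z_H2).
have /(congr1 (intr : int -> rat)) := cost_icc z x_gt0.
have /(congr1 (intr : int -> rat)) := H2_H1 count_le2 z.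
rewrite -(BPSP_icc xG zopt) !rmorphB !rmorphD !rmorphM /= => H2z costz.
by split => //; lra.
Qed.
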